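(* For $0\le i\le n$, $dp(h,i)$ is strictly increasing (in lexicographic order) for $0\le h\le i$.
   Context: Let $x_0\le x_1\le\cdots\le x_{n+1}$ be real numbers, $\{x\}=x-\lfloor x\rfloor$, and let $\pi=(\pi_0,\dots,\pi_{n+1})$ be the permutation of $\{0,\dots,n+1\}$ such that for $0\le i<j\le n+1$, $\pi_i>\pi_j$ iff $(\{x_i\},-x_i,i)<(\{x_j\},-x_j,j)$ lexicographically. For a sequence of indices $s_0<\cdots<s_k$, a drop is a consecutive pair $(s_{h-1},s_h)$ with $\pi_{s_{h-1}}>\pi_{s_h}$. For $0\le h\le i\le n$, $dp(h,i)$ is the pair $(d(h,i),p(h,i))$, where $d(h,i)$ is the minimum number of drops over all sequences of $h+1$ indices $0=s_0<s_1<\cdots<s_h\le i$, and $p(h,i)$ is the minimum of $\pi_{s_h}$ over all such sequences having exactly $d(h,i)$ drops. Pairs are compared lexicographically. *)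

From mathcomp Require Import all_boot all_order all_algebra all_fingroup.
Set Implicit Arguments. Unset Strict Implicit. Unset Printing Implicit Defensive.
Import Order.TTheory GRing.Theory Num.Theory.

(* Indices 0..n+1 are 'I_n.+2; x : 'I_n.+2 -> R; pi : 'S_n.+2 (values read as nat). *)

Local Open Scope ring_scope.
Definition frac {R : archiRealFieldType} (x : R) : R := x - (Num.floor x)%:~R.

(* strict lexicographic order on triples ({x_i}, -x_i, i) *)
Definition key_lt {R : archiRealFieldType} {N : nat} (x : 'I_N -> R) (i j : 'I_N) : bool :=
  (frac (x i) < frac (x j)) ||
  ((frac (x i) == frac (x j)) &&
   ((- x i < - x j) || ((- x i == - x j) && (i < j)%N))).
Local Close Scope ring_scope.

Section DP.
Variables (n : nat) (pi : 'S_n.+2).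

Definition idx_seq (h : nat) := {ffun 'I_h.+1 -> 'I_n.+2}.

Definition admissible (h i : nat) (s : idx_seq h) : bool :=
  [&& (s ord0 : nat) == 0,
      [forall k : 'I_h, (s (inord k) < s (inord k.+1))%N] &
      (s ord_max <= i)%N].

Definition drops (h : nat) (s : idx_seq h) : nat :=
  \sum_(k < h) (pi (s (inord k)) > pi (s (inord k.+1)))%N.

(* d(h,i): minimum number of drops over admissible sequences.
   (The default h.+1 of the min is never reached: drops <= h and, for h <= i,
   admissible sequences exist.) *)
Definition dval (h i : nat) : nat :=
  \big[minn/h.+1]_(s : idx_seq h | admissible i s) drops s.

(* p(h,i): minimum of pi_{s_h} over admissible sequences with exactly d(h,i)
   drops.  (Default n.+2 is never reached since all values of pi are < n+2.) *)
Definition pval (h i : nat) : nat :=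
  \big[minn/n.+2]_(s : idx_seq h | admissible i s && (drops s == dval h i))
     (pi (s ord_max) : nat).

Definition dp (h i : nat) : nat * nat := (dval h i, pval h i).
End DP.

Definition lex_lt (a b : nat * nat) : bool :=
  (a.1 < b.1)%N || ((a.1 == b.1) && (a.2 < b.2)%N).

From Pilot Require Import Defs.
From mathcomp Require Import all_boot all_order all_algebra all_fingroup.
From mathcomp Require Import zify.
Import Order.TTheory GRing.Theory Num.Theory.

Set Implicit Arguments.
Unset Strict Implicit.
Unset Printing Implicit Defensive.

(* Take a sequence optimal for dp(h+1,i), i.e. with d(h+1,i) drops and last
   value p(h+1,i), and delete its last index.  What remains is admissible for
   dp(h,i) and has one drop fewer if the deleted pair was a drop, so then
   d(h,i) < d(h+1,i).  Otherwise d(h,i) <= d(h+1,i), and in case of equality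
   the shortened sequence is optimal for d(h,i) and ends at a value of pi
   smaller than p(h+1,i), so p(h,i) < p(h+1,i). *)

Section OptimalSequences.
Variables (n : nat) (pi : 'S_n.+2).
Implicit Types h i : nat.

Lemma admissible_lt h i (s : idx_seq n h) k :
  admissible i s -> k < h -> s (inord k) < s (inord k.+1).
Proof. by case/and3P=> _ /forallP incr_s _ kh; exact: (incr_s (Ordinal kh)). Qed.

Lemma drops_le h (s : idx_seq n h) : drops pi s <= h.
Proof.
rewrite -[leqRHS]card_ord -sum1_card.
by apply: leq_sum => k _; exact: leq_b1.
Qed.

Lemma admissible_exists h i : h <= i <= n.+1 ->
  exists s : idx_seq n h, admissible i s.
Proof.
case/andP=> hi iN; exists [ffun k : 'I_h.+1 => inord k].
apply/and3P; split.
- by rewrite ffunE inordK.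
- by apply/forallP=> k; have kh := ltn_ord k; rewrite !ffunE !inordK //=; lia.
- by rewrite ffunE /= inordK //; lia.
Qed.

Lemma dval_le h i (s : idx_seq n h) :
  admissible i s -> dval pi h i <= drops pi s.
Proof. exact: (bigmin_le_cond (T := nat)). Qed.

Lemma pval_le h i (s : idx_seq n h) :
  admissible i s -> drops pi s = dval pi h i ->
  Defs.pval pi h i <= pi (s ord_max).
Proof.
by move=> adm_s drops_s; apply: (bigmin_le_cond (T := nat)); rewrite adm_s drops_s eqxx.
Qed.

Lemma dval_attained h i : h <= i <= n.+1 ->
  exists2 s : idx_seq n h, admissible i s & drops pi s = dval pi h i.
Proof.
case/admissible_exists=> s0 adm_s0.
have [s adm_s dvalE] := eq_bigmin (T := nat) (x := h.+1) _ _ (@drops n pi h)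
  adm_s0 (fun s _ => leqW (drops_le s)).
by exists s; last exact/esym.
Qed.

Lemma pval_attained h i : h <= i <= n.+1 ->
  exists s : idx_seq n h, [/\ admissible i s, drops pi s = dval pi h i
                            & (pi (s ord_max) : nat) = Defs.pval pi h i].
Proof.
case/dval_attained=> s0 adm_s0 drops_s0.
have opt_s0 : admissible i s0 && (drops pi s0 == dval pi h i).
  by rewrite adm_s0 drops_s0 eqxx.
have [s /andP[adm_s /eqP drops_s] pvalE] := eq_bigmin (T := nat) (x := n.+2) _
  (fun s => admissible i s && (drops pi s == dval pi h i))
  (fun s : idx_seq n h => pi (s ord_max) : nat)
  opt_s0 (fun s _ => ltnW (ltn_ord (pi (s ord_max)))).
by exists s; split; last exact/esym.
Qed.

Definition drop_last h (s : idx_seq n h.+1) : idx_seq n h :=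
  [ffun k => s (widen_ord (leqnSn _) k)].

Lemma drop_lastE h (s : idx_seq n h.+1) k :
  k <= h -> drop_last s (inord k) = s (inord k).
Proof.
move=> kh; rewrite ffunE; congr (s _); apply: val_inj.
by rewrite /= !inordK // ltnS ltnW.
Qed.

Lemma drop_last_max h (s : idx_seq n h.+1) : drop_last s ord_max = s (inord h).
Proof. by rewrite -drop_lastE // -[ord_max]inord_val. Qed.

Lemma admissible_drop_last h i (s : idx_seq n h.+1) :
  admissible i s -> admissible i (drop_last s).
Proof.
move=> adm_s; case/and3P: (adm_s) => s0 _ s_max; apply/and3P; split.
- by rewrite ffunE (_ : widen_ord _ _ = ord0) //; exact: val_inj.
- apply/forallP=> k; have k_le_h := ltnW (ltn_ord k).
  by rewrite !drop_lastE // (admissible_lt adm_s).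
- rewrite drop_last_max (leq_trans _ s_max) // ltnW //.
  by rewrite -[ord_max]inord_val (admissible_lt adm_s).
Qed.

Lemma drops_drop_last h (s : idx_seq n h.+1) :
  drops pi s = drops pi (drop_last s) + (pi (s (inord h.+1)) < pi (s (inord h))).
Proof.
rewrite /drops big_ord_recr /=; congr (_ + _).
by apply: eq_bigr => k _; rewrite !drop_lastE //; exact: ltnW.
Qed.

Lemma dp_lt_succ h i : h < i <= n.+1 -> lex_lt (dp pi h i) (dp pi h.+1 i).
Proof.
move=> hi; have [s [adm_s drops_s pval_s]] := pval_attained hi.
have adm_t := admissible_drop_last adm_s.
have dval_t := dval_le adm_t.
rewrite /lex_lt /dp /= -drops_s -pval_s drops_drop_last.
case: (ltnP (pi (s (inord h.+1))) (pi (s (inord h)))) => [_ | rise].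
  by rewrite addn1 ltnS dval_t.
rewrite addn0; case: ltngtP dval_t => //= dval_eq_t _.
have s_incr := admissible_lt adm_s (ltnSn h).
have pi_ne : (pi (s (inord h)) : nat) != pi (s (inord h.+1)).
  by apply: contraTneq s_incr => /val_inj /perm_inj ->; rewrite ltnn.
rewrite -[ord_max]inord_val (leq_ltn_trans (pval_le adm_t (esym dval_eq_t))) //.
by rewrite drop_last_max ltn_neqAle pi_ne.
Qed.

End OptimalSequences.

Lemma lex_lt_trans : transitive lex_lt.
Proof. by case=> [b1 b2] [a1 a2] [c1 c2]; rewrite /lex_lt /=; lia. Qed.

Theorem lemma6 (R : archiRealFieldType) (n : nat) (x : 'I_n.+2 -> R)
    (pi : 'S_n.+2)
    (hx : forall i j : 'I_n.+2, (i <= j)%N -> (x i <= x j)%R)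
    (hpi : forall i j : 'I_n.+2, (i < j)%N ->
             (pi i > pi j)%N = key_lt x i j) :
  forall i h h' : nat, (i <= n)%N -> (h < h')%N -> (h' <= i)%N ->
    lex_lt (dp pi h i) (dp pi h' i).
Proof.
move=> i h h' iN hh' h'i; pose D := [pred k | k <= i].
have D_convex : {in D &, forall a b c, a < c < b -> c \in D}.
  by move=> a b _ bD c /andP[_ cb]; rewrite inE (leq_trans (ltnW cb)).
have dp_step : {in D, forall k, k.+1 \in D -> lex_lt (dp pi k i) (dp pi k.+1 i)}.
  by move=> k _ /[!inE] ki; apply: dp_lt_succ; rewrite ki leqW.
apply: (homo_ltn_in lex_lt_trans D_convex dp_step) => //.
by rewrite inE (leq_trans (ltnW hh')).
Qed.
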